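(* In the setting of the context, assume in addition that $\frac1q\|\cdot\|^q$ is $(q,\beta)$-uniformly convex w.r.t. $\|\cdot\|$ for some $\beta>0$. Let $i\ge1$, let $u_i\in\partial f(x_i)$ be the subgradient used in $E_i$, and let $\zeta_i\in\partial\bigl(\frac1q\|\cdot\|^q\bigr)(x_i-\hat x_{i-1})$. Then for any $\gamma_i'\in(0,\gamma]$, $$E_i\le a_i\Bigl\langle u_i+\frac{\gamma_i'A_i^{q-1}}{a_i^q}\zeta_i,\ \hat z_i-z_i\Bigr\rangle-\gamma_i'\Bigl(\frac{A_i^q}{q\,a_i^q}\|x_i-\hat x_{i-1}\|^q+\frac{\beta}{q}\|\hat z_i-z_i\|^q\Bigr).$$
   Context: $\|\cdot\|$ is a norm on $\mathbb{R}^d$. A function $\varphi:\mathbb{R}^d\to\mathbb{R}\cup\{+\infty\}$ is $(s,\sigma)$-uniformly convex w.r.t. $\|\cdot\|$ ($s\ge2$, $\sigma>0$) if $\varphi(y)\ge\varphi(x)+\langle\zeta,y-x\rangle+\frac{\sigma}{s}\|y-x\|^s$ for all $y$, all $x$ with $\partial\varphi(x)\ne\emptyset$ and all $\zeta\in\partial\varphi(x)$. $f=g+l$ with $g:\mathbb{R}^d\to\mathbb{R}$ convex and differentiable and $l:\mathbb{R}^d\to\mathbb{R}\cup\{+\infty\}$ proper, closed, convex. $\hat f(x;y):=g(y)+\langle\nabla g(y),x-y\rangle+l(x)$. Fix $q\ge2$, $\gamma>0$, $x_0\in\mathrm{dom}\,l$, and $h(\cdot;x_0):\mathbb{R}^d\to\mathbb{R}$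 convex with $h(x;x_0)\ge0$, $h(x;x_0)=0$ iff $x=x_0$, $(q,\gamma)$-uniformly convex w.r.t. $\|\cdot\|$. Let $a_1,a_2,\dots>0$, $A_0:=0$, $A_i:=A_{i-1}+a_i$. For points $x_1,x_2,\dots\in\mathrm{dom}\,\partial l$: $\psi_k(x):=\sum_{j=1}^ka_j\hat f(x;x_j)+h(x;x_0)$, $z_0:=x_0$, $z_k:=\operatorname{argmin}\psi_k$ ($k\ge 1$); $\hat x_{i-1}:=\frac{a_i}{A_i}z_{i-1}+\frac{A_{i-1}}{A_i}x_{i-1}$, $\hat z_i:=\frac{A_i}{a_i}x_i-\frac{A_{i-1}}{a_i}x_{i-1}$; for $u_i\in\partial f(x_i)=\nabla g(x_i)+\partial l(x_i)$, $E_i:=A_i\langle u_i,x_i-\frac{a_i}{A_i}z_i-\frac{A_{i-1}}{A_i}x_{i-1}\rangle-\frac{\gamma}{q}\|z_i-z_{i-1}\|^q$. *)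

From Stdlib Require Import Reals.
From Stdlib Require Vectors.Fin.
Open Scope R_scope.

Definition vec (d : nat) := Fin.t d -> R.

Fixpoint fsum (d : nat) : (Fin.t d -> R) -> R :=
  match d with
  | O => fun _ => 0
  | S n => fun f => f Fin.F1 + fsum n (fun i => f (Fin.FS i))
  end.

Definition vadd {d} (x y : vec d) : vec d := fun i => x i + y i.
Definition vsub {d} (x y : vec d) : vec d := fun i => x i - y i.
Definition vscal {d} (c : R) (x : vec d) : vec d := fun i => c * x i.
Definition vzero {d} : vec d := fun _ => 0.
Definition inner {d} (x y : vec d) : R := fsum d (fun i => x i * y i).

Definition is_norm {d} (N : vec d -> R) : Prop :=
  (forall x, 0 <= N x) /\
  (forall x, N x = 0 -> x = vzero) /\
  (forall c x, N (vscal c x) = Rabs c * N x) /\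
  (forall x y, N (vadd x y) <= N x + N y).

Definition powr (t p : R) : R := if Rle_dec t 0 then 0 else Rpower t p.

Definition convex_fun {d} (phi : vec d -> R) : Prop :=
  forall x y t, 0 <= t <= 1 ->
    phi (vadd (vscal t x) (vscal (1 - t) y)) <= t * phi x + (1 - t) * phi y.

Definition subgrad {d} (phi : vec d -> R) (x z : vec d) : Prop :=
  forall y, phi y >= phi x + inner z (vsub y x).

Definition unif_convex {d} (N : vec d -> R) (s sigma : R) (phi : vec d -> R) : Prop :=
  forall x z, subgrad phi x z ->
    forall y, phi y >= phi x + inner z (vsub y x) + sigma / s * powr (N (vsub y x)) s.

Definition is_grad {d} (N : vec d -> R) (g : vec d -> R) (x G : vec d) : Prop :=
  forall eps, 0 < eps -> exists del, 0 < del /\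
    forall k, N k < del -> Rabs (g (vadd x k) - g x - inner G k) <= eps * N k.

Inductive ereal := EFin (r : R) | EInf.

Definition ele (a b : ereal) : Prop :=
  match a, b with
  | _, EInf => True
  | EInf, EFin _ => False
  | EFin r, EFin s => r <= s
  end.
Definition eadd (a b : ereal) : ereal :=
  match a, b with EFin r, EFin s => EFin (r + s) | _, _ => EInf end.
(* multiplication by a positive scalar *)
Definition escal (c : R) (a : ereal) : ereal :=
  match a with EFin r => EFin (c * r) | EInf => EInf end.
Definition elt (t : R) (a : ereal) : Prop :=
  match a with EFin r => t < r | EInf => True end.

Definition in_dom {d} (l : vec d -> ereal) (x : vec d) : Prop := exists r, l x = EFin r.
Definition proper {d} (l : vec d -> ereal) : Prop := exists x, in_dom l x.
Definition econvex {d} (l : vec d -> ereal) : Prop :=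
  forall x y rx ry t, 0 <= t <= 1 -> l x = EFin rx -> l y = EFin ry ->
    ele (l (vadd (vscal t x) (vscal (1 - t) y))) (EFin (t * rx + (1 - t) * ry)).
(* closed = lower semicontinuous *)
Definition eclosed {d} (N : vec d -> R) (l : vec d -> ereal) : Prop :=
  forall x t, elt t (l x) -> exists del, 0 < del /\
    forall y, N (vsub y x) < del -> elt t (l y).
Definition esubgrad {d} (l : vec d -> ereal) (x z : vec d) : Prop :=
  exists rx, l x = EFin rx /\
    forall y, ele (EFin (rx + inner z (vsub y x))) (l y).
Definition is_argmin {d} (phi : vec d -> ereal) (z : vec d) : Prop :=
  (exists r, phi z = EFin r) /\ forall y, ele (phi z) (phi y).

Fixpoint Asum (a : nat -> R) (k : nat) : R :=
  match k with O => 0 | S k' => Asum a k' + a (S k') end.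

Definition fhat {d} (g : vec d -> R) (grad : vec d -> vec d) (l : vec d -> ereal)
  (x y : vec d) : ereal :=
  eadd (EFin (g y + inner (grad y) (vsub x y))) (l x).

Fixpoint psi_sum {d} (g : vec d -> R) (grad : vec d -> vec d) (l : vec d -> ereal)
  (a : nat -> R) (xs : nat -> vec d) (k : nat) (x : vec d) : ereal :=
  match k with
  | O => EFin 0
  | S k' => eadd (psi_sum g grad l a xs k' x) (escal (a (S k')) (fhat g grad l x (xs (S k'))))
  end.

Definition psi {d} (g : vec d -> R) (grad : vec d -> vec d) (l : vec d -> ereal)
  (h : vec d -> R) (a : nat -> R) (xs : nat -> vec d) (k : nat) (x : vec d) : ereal :=
  eadd (psi_sum g grad l a xs k x) (EFin (h x)).

Definition xhat {d} (a : nat -> R) (z xs : nat -> vec d) (k : nat) : vec d :=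
  vadd (vscal (a (S k) / Asum a (S k)) (z k)) (vscal (Asum a k / Asum a (S k)) (xs k)).

Definition zhat {d} (a : nat -> R) (xs : nat -> vec d) (i : nat) : vec d :=
  vsub (vscal (Asum a i / a i) (xs i)) (vscal (Asum a (i - 1)%nat / a i) (xs (i - 1)%nat)).

Definition Eerr {d} (N : vec d -> R) (q gam : R) (a : nat -> R) (z xs : nat -> vec d)
  (u : vec d) (i : nat) : R :=
  Asum a i * inner u (vsub (vsub (xs i) (vscal (a i / Asum a i) (z i)))
                           (vscal (Asum a (i - 1)%nat / Asum a i) (xs (i - 1)%nat)))
  - gam / q * powr (N (vsub (z i) (z (i - 1)%nat))) q.

From Stdlib Require Import Reals Lra Lia FunctionalExtensionality.
Open Scope R_scope.

(* The estimate on E_i is a purely algebraic consequence of the uniform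
   convexity of phi := (1/q) N^q; none of the optimality properties of the
   scheme are needed.  Write A = A_i, a = a_i, c = a/A, w = x_i - \hat x_{i-1}
   and e = \hat z_i - z_i.  Two vector identities hold by the definitions of
   \hat x_{i-1} and \hat z_i:
     (1)  x_i - c z_i - (A_{i-1}/A) x_{i-1} = c e      (the direction in E_i),
     (2)  c (z_i - z_{i-1}) - w = -c e.
   Uniform convexity of phi at w, with subgradient zeta, evaluated at the point
   c (z_i - z_{i-1}), therefore gives after positive homogeneity of N
     c^q/q |z_i - z_{i-1}|^q >= |w|^q/q - c <zeta, e> + beta c^q/q |e|^q.
   Multiplying by gam'/c^q, using gam' <= gam, and rewriting
   a gam' A^{q-1}/a^q = gam' c/c^q and A^q/(q a^q) = 1/(q c^q) yields the claim. *)

Lemma fsum_plus (d : nat) (f g : Fin.t d -> R) :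
  fsum d (fun i => f i + g i) = fsum d f + fsum d g.
Proof.
  induction d as [|d IH]; simpl; [lra|].
  rewrite (IH (fun i => f (Fin.FS i)) (fun i => g (Fin.FS i))); lra.
Qed.

Lemma fsum_scal (d : nat) (c : R) (f : Fin.t d -> R) :
  fsum d (fun i => c * f i) = c * fsum d f.
Proof.
  induction d as [|d IH]; simpl; [lra|].
  rewrite (IH (fun i => f (Fin.FS i))); lra.
Qed.

Lemma inner_scal_r (d : nat) (u v : vec d) (c : R) :
  inner u (vscal c v) = c * inner u v.
Proof.
  unfold inner, vscal; rewrite <- fsum_scal.
  f_equal; apply functional_extensionality; intro; ring.
Qed.

Lemma inner_add_scal_l (d : nat) (u w v : vec d) (k : R) :
  inner (vadd u (vscal k w)) v = inner u v + k * inner w v.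
Proof.
  unfold inner, vscal, vadd; rewrite <- fsum_scal, <- fsum_plus.
  f_equal; apply functional_extensionality; intro; ring.
Qed.

Lemma powr_pos (t p : R) : 0 < t -> powr t p = Rpower t p.
Proof. intro Ht; unfold powr; destruct (Rle_dec t 0); [lra | reflexivity]. Qed.

Lemma powr_nonneg (t p : R) : 0 <= powr t p.
Proof.
  unfold powr; destruct (Rle_dec t 0); [lra|].
  left; apply exp_pos.
Qed.

Lemma powr_gt0 (t p : R) : 0 < t -> 0 < powr t p.
Proof. intro Ht; rewrite powr_pos by exact Ht; apply exp_pos. Qed.

Lemma powr_mul (c t p : R) : 0 < c -> 0 <= t -> powr (c * t) p = powr c p * powr t p.
Proof.
  intros Hc Ht; destruct (Req_dec t 0) as [->|Hne].
  - unfold powr; rewrite Rmult_0_r; destruct (Rle_dec 0 0); [ring | lra].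
  - rewrite !powr_pos by nra; symmetry; apply Rpower_mult_distr; lra.
Qed.

Lemma powr_split_one (t p : R) : 0 < t -> powr t p = powr t (p - 1) * t.
Proof.
  intro Ht; rewrite !powr_pos by exact Ht.
  replace p with ((p - 1) + 1) at 1 by ring.
  rewrite Rpower_plus, Rpower_1; lra.
Qed.

Lemma Asum_pos (a : nat -> R) (k : nat) :
  (forall j, (1 <= j)%nat -> 0 < a j) -> 0 < Asum a (S k).
Proof.
  intro Ha; induction k as [|k IH]; simpl.
  - assert (0 < a 1%nat) by (apply Ha; lia); lra.
  - assert (0 < a (S (S k))) by (apply Ha; lia); simpl in IH; lra.
Qed.

Lemma powr_norm_scal (d : nat) (N : vec d -> R) (p c : R) (v : vec d) :
  is_norm N -> c <> 0 -> powr (N (vscal c v)) p = powr (Rabs c) p * powr (N v) p.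
Proof.
  intros [Hnn [_ [Hhom _]]] Hc; rewrite Hhom.
  apply powr_mul; [apply Rabs_pos_lt; exact Hc | apply Hnn].
Qed.

(* Uniform convexity of (1/q) N^q at w, tested at a point y with
   y - w = -c e (c > 0) and y = c D; homogeneity pulls out the factors c^q. *)
Lemma unif_convex_power_scaled (d : nat) (N : vec d -> R) (q beta c : R)
    (w zeta D e : vec d) :
  is_norm N -> 0 < c ->
  unif_convex N q beta (fun v => 1 / q * powr (N v) q) ->
  subgrad (fun v => 1 / q * powr (N v) q) w zeta ->
  vsub (vscal c D) w = vscal (- c) e ->
  1 / q * (powr c q * powr (N D) q) >=
    1 / q * powr (N w) q - c * inner zeta e + beta / q * (powr c q * powr (N e) q).
Proof.
  intros HN Hc Huc Hsub Hdir.
  pose proof (Huc w zeta Hsub (vscal c D)) as H; cbv beta in H.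
  rewrite Hdir, inner_scal_r, !powr_norm_scal in H by (auto; lra).
  rewrite Rabs_Ropp, Rabs_pos_eq in H by lra.
  lra.
Qed.

Lemma scheme_gap_identity (d : nat) (a : nat -> R) (xs z : nat -> vec d) (j : nat) :
  0 < a (S j) -> 0 < Asum a (S j) ->
  let c := a (S j) / Asum a (S j) in
  vsub (vscal c (vsub (z (S j)) (z j))) (vsub (xs (S j)) (xhat a z xs j))
  = vscal (- c) (vsub (zhat a xs (S j)) (z (S j))).
Proof.
  intros Ha HA c; apply functional_extensionality; intro t.
  unfold c, xhat, zhat, vsub, vscal, vadd; rewrite Nat.sub_succ, Nat.sub_0_r.
  change (Asum a (S j)) with (Asum a j + a (S j)) in *.
  field; lra.
Qed.

Lemma Eerr_direction (d : nat) (N : vec d -> R) (q gam : R) (a : nat -> R)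
    (z xs : nat -> vec d) (u : vec d) (j : nat) :
  0 < a (S j) -> 0 < Asum a (S j) ->
  Eerr N q gam a z xs u (S j) =
    a (S j) * inner u (vsub (zhat a xs (S j)) (z (S j)))
    - gam / q * powr (N (vsub (z (S j)) (z j))) q.
Proof.
  intros Ha HA; unfold Eerr; rewrite Nat.sub_succ, Nat.sub_0_r.
  assert (Hdir : vsub (vsub (xs (S j)) (vscal (a (S j) / Asum a (S j)) (z (S j))))
                      (vscal (Asum a j / Asum a (S j)) (xs j))
                 = vscal (a (S j) / Asum a (S j)) (vsub (zhat a xs (S j)) (z (S j)))).
  { apply functional_extensionality; intro t.
    unfold zhat, vsub, vscal; rewrite Nat.sub_succ, Nat.sub_0_r.
    change (Asum a (S j)) with (Asum a j + a (S j)) in *.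
    field; lra. }
  rewrite Hdir, inner_scal_r; f_equal; field; lra.
Qed.

(* The scalar rescaling step: multiplying the scaled uniform convexity
   inequality by gam'/P (P = c^q) and trading gam for gam' <= gam. *)
Lemma rescale_bound (q gam gam' P c n1 nw ne I J a k beta : R) :
  0 < q -> 0 < P -> 0 < gam' <= gam -> 0 <= n1 ->
  a * k = gam' * c / P ->
  1 / q * (P * n1) >= 1 / q * nw - c * J + beta / q * (P * ne) ->
  a * I - gam / q * n1 <= a * (I + k * J) - gam' * (1 / (q * P) * nw + beta / q * ne).
Proof.
  intros Hq HP Hgam Hn1 Hk Huc.
  assert (Hscaled : gam' / P * (1 / q * nw - c * J + beta / q * (P * ne))
                    <= gam' / P * (1 / q * (P * n1))).
  { apply Rmult_le_compat_l; [apply Rlt_le, Rdiv_lt_0_compat |]; lra. }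
  assert (Hgq : gam' / q * n1 <= gam / q * n1).
  { apply Rmult_le_compat_r; [exact Hn1|].
    unfold Rdiv; apply Rmult_le_compat_r; [left; apply Rinv_0_lt_compat |]; lra. }
  replace (gam' / P * (1 / q * (P * n1))) with (gam' / q * n1) in Hscaled by (field; lra).
  replace (gam' / P * (1 / q * nw - c * J + beta / q * (P * ne)))
    with (gam' * (1 / (q * P) * nw + beta / q * ne) - gam' * c / P * J)
    in Hscaled by (field; lra).
  rewrite Rmult_plus_distr_l, <- Rmult_assoc, Hk; lra.
Qed.

Lemma step_coefficients (q gam' a A : R) :
  0 < q -> 0 < a -> 0 < A ->
  a * (gam' * powr A (q - 1) / powr a q) = gam' * (a / A) / powr (a / A) q /\
  powr A q / (q * powr a q) = 1 / (q * powr (a / A) q).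
Proof.
  intros Hq Ha HA.
  assert (Hc : 0 < a / A) by (apply Rdiv_lt_0_compat; lra).
  assert (Hpow : powr a q = powr (a / A) q * powr A q).
  { rewrite <- powr_mul by lra; f_equal; field; lra. }
  pose proof (powr_gt0 (a / A) q Hc); pose proof (powr_gt0 A (q - 1) HA).
  rewrite Hpow, (powr_split_one A q HA); split; field; repeat split; lra.
Qed.

Theorem mainTheorem8
  (d : nat) (N : vec d -> R) (HN : is_norm N)
  (g : vec d -> R) (grad : vec d -> vec d) (l : vec d -> ereal)
  (Hg_conv : convex_fun g) (Hg_grad : forall y, is_grad N g y (grad y))
  (Hl_proper : proper l) (Hl_closed : eclosed N l) (Hl_conv : econvex l)
  (q gam : R) (Hq : 2 <= q) (Hgam : 0 < gam)
  (x0 : vec d) (Hx0 : in_dom l x0)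
  (h : vec d -> R) (Hh_conv : convex_fun h) (Hh_nonneg : forall x, 0 <= h x)
  (Hh_zero : forall x, h x = 0 <-> x = x0) (Hh_uc : unif_convex N q gam h)
  (a : nat -> R) (Ha : forall j, (1 <= j)%nat -> 0 < a j)
  (xs : nat -> vec d) (Hxs0 : xs 0%nat = x0)
  (Hxs : forall k, (1 <= k)%nat -> exists v, esubgrad l (xs k) v)
  (z : nat -> vec d) (Hz0 : z 0%nat = x0)
  (Hz : forall k, (1 <= k)%nat -> is_argmin (psi g grad l h a xs k) (z k))
  (beta : R) (Hbeta : 0 < beta)
  (Hphi : unif_convex N q beta (fun v => 1 / q * powr (N v) q))
  (i : nat) (Hi : (1 <= i)%nat)
  (u : vec d) (Hu : exists v, esubgrad l (xs i) v /\ u = vadd (grad (xs i)) v)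
  (zeta : vec d)
  (Hzeta : subgrad (fun v => 1 / q * powr (N v) q) (vsub (xs i) (xhat a z xs (i - 1)%nat)) zeta)
  (gam' : R) (Hgam' : 0 < gam' <= gam) :
  Eerr N q gam a z xs u i <=
    a i * inner (vadd u (vscal (gam' * powr (Asum a i) (q - 1) / powr (a i) q) zeta))
                (vsub (zhat a xs i) (z i))
    - gam' * (powr (Asum a i) q / (q * powr (a i) q)
                * powr (N (vsub (xs i) (xhat a z xs (i - 1)%nat))) q
              + beta / q * powr (N (vsub (zhat a xs i) (z i))) q).
Proof.
  destruct i as [|j]; [lia|]; rewrite Nat.sub_succ, Nat.sub_0_r in *.
  assert (Hai : 0 < a (S j)) by (apply Ha; lia).
  assert (HA : 0 < Asum a (S j)) by (apply Asum_pos; auto).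
  assert (Hc : 0 < a (S j) / Asum a (S j)) by (apply Rdiv_lt_0_compat; lra).
  pose proof (unif_convex_power_scaled _ _ _ _ _ _ _ _ _ HN Hc Hphi Hzeta
                (scheme_gap_identity _ a xs z j Hai HA)) as Huc.
  destruct (step_coefficients q gam' _ _ ltac:(lra) Hai HA) as [Hk Hcoef].
  rewrite Eerr_direction, inner_add_scal_l, Hcoef by assumption.
  eapply rescale_bound; eauto using powr_gt0, powr_nonneg; lra.
Qed.
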